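(* For all $N\ge2$, $n\ge0$ and all $x\in\mathbb{T}^N=\{x\in\mathbb{C}^N:|x_j|=1\ \forall j\}$, $\sigma_n^{N-1}(x)$ is real and $\sigma_n^{N-1}(x)\ge0$.
   Context: $(t)_m=\prod_{i=1}^m(t+i-1)$. $\boldsymbol{Z}_{N,k}=\{\alpha\in\mathbb{Z}^N:\sum_i\alpha_i=0,\ \sum_i|\alpha_i|=2k\}$, $S_k(x)=\sum_{\alpha\in\boldsymbol{Z}_{N,k}}x^\alpha$, and for $\delta>0$, $\sigma_n^\delta(x)=\sum_{k=0}^n\frac{(-n)_k}{(-n-\delta)_k}S_k(x)$. *)

From HB Require Import structures.
From mathcomp Require Import all_boot all_order all_algebra.
Set Implicit Arguments. Unset Strict Implicit. Unset Printing Implicit Defensive.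
Import Order.TTheory GRing.Theory Num.Theory.
Local Open Scope ring_scope.

Definition poch (R : pzRingType) (t : R) (m : nat) : R :=
  \prod_(i < m) (t + i%:R).

Definition inZNk {N : nat} (k : nat) (a : 'I_N -> int) : bool :=
  (\sum_(i < N) a i == 0) && (\sum_(i < N) absz (a i) == 2 * k)%N.

(* Every alpha in Z_{N,k} has entries in [-2k, 2k]; we enumerate those
   via f : 'I_N -> 'I_(4k+1), alpha_i = f i - 2k (an injective encoding). *)
Definition shiftZ (N k : nat) (f : {ffun 'I_N -> 'I_(4 * k + 1)}) : 'I_N -> int :=
  fun i => (nat_of_ord (f i))%:Z - (2 * k)%:Z.

Definition monoZ (C : unitRingType) (N : nat) (x : 'I_N -> C) (a : 'I_N -> int) : C :=
  \prod_(i < N) (x i) ^ (a i).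

Definition Sk (C : unitRingType) (N k : nat) (x : 'I_N -> C) : C :=
  \sum_(f : {ffun 'I_N -> 'I_(4 * k + 1)} | inZNk k (shiftZ f)) monoZ x (shiftZ f).

Definition sigma (C : fieldType) (N : nat) (delta : C) (n : nat) (x : 'I_N -> C) : C :=
  \sum_(k < n.+1)
     (poch (- (n%:R)) k / poch (- (n%:R) - delta) k) * Sk k x.

From HB Require Import structures.
From mathcomp Require Import all_boot all_order all_algebra zify ring.
Import Order.TTheory GRing.Theory Num.Theory.
Set Implicit Arguments. Unset Strict Implicit. Unset Printing Implicit Defensive.
Local Open Scope ring_scope.

(* On the torus the conjugate of x_j is its inverse, so for the complete
   homogeneous symmetric function h_n we get |h_n(x)|^2 = sum x^(b - g) over
   pairs (b, g) of weak compositions of n into N parts.  The difference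
   alpha = b - g lies in Z_{N,k} with k = sum_i (b_i - g_i)_+ <= n, and the pairs
   with a given alpha are (t + alpha_+, t + alpha_-) for t = min(b, g) a weak
   composition of n - k, so there are C(N-1+n-k, N-1) of them.  Since
   (-n)_k / (-n-N+1)_k = C(N-1+n-k, N-1) / C(N-1+n, N-1), this gives
   sigma_n^{N-1}(x) = |h_n(x)|^2 / C(N-1+n, N-1) >= 0. *)

Lemma poch_oppn (R : pzRingType) (n k : nat) :
  poch (- n%:R : R) k = (-1) ^+ k * (n ^_ k)%:R.
Proof.
elim: k => [|k IHk]; first by rewrite /poch big_ord0 expr0 mul1r.
rewrite /poch big_ord_recr /= -/(poch _ k) IHk ffactnSr exprSr -mulrA.
have [lt_nk | le_kn] := ltnP n k; first by rewrite ffact_small // !(mul0r, mulr0).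
by rewrite addrC -opprB -natrB // mulrN natrM mulN1r mulrN mulrA.
Qed.

Lemma bin_ffact_shift (m n k : nat) : (k <= n)%N ->
  ('C(m + n, m) * n ^_ k = 'C(m + (n - k), m) * (n + m) ^_ k)%N.
Proof.
move=> le_kn; apply/eqP.
rewrite -(eqn_pmul2r (fact_gt0 m)) -(eqn_pmul2r (fact_gt0 (n - k))).
have := bin_fact (leq_addr n m); rewrite addKn -(ffact_fact le_kn) => fact_mn.
have := bin_fact (leq_addr (n - k) m); rewrite addKn => fact_mnk.
have ffact_mn : ((n + m) ^_ k * (m + (n - k))`! = (m + n)`!)%N.
  by rewrite addnBA // [(m + n)%N]addnC ffact_fact // (leq_trans le_kn (leq_addr m n)).
apply/eqP; transitivity (m + n)`!; first by rewrite -fact_mn; ring.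
by rewrite -ffact_mn -fact_mnk; ring.
Qed.

Lemma bin_mul_poch_ratio (F : numFieldType) (m n k : nat) : (k <= n)%N ->
  'C(m + n, m)%:R * (poch (- n%:R : F) k / poch (- n%:R - m%:R) k)
  = 'C(m + (n - k), m)%:R.
Proof.
move=> le_kn; rewrite -opprD -natrD !poch_oppn invfM mulrACA.
rewrite divff ?expf_neq0 ?oppr_eq0 ?oner_eq0 // mul1r.
have nz : ((n + m) ^_ k)%:R != 0 :> F.
  by rewrite pnatr_eq0 -lt0n ffact_gt0 (leq_trans le_kn (leq_addr m n)).
by rewrite mulrA -natrM bin_ffact_shift // natrM mulfK.
Qed.

Lemma leq_sum_term (I : finType) (F : I -> nat) (j : I) : (F j <= \sum_i F i)%N.
Proof. by rewrite (bigD1 j) //= leq_addr. Qed.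

Lemma sum_subn_sym (I : finType) (b g : I -> nat) :
  (\sum_i b i = \sum_i g i)%N -> (\sum_i (b i - g i) = \sum_i (g i - b i))%N.
Proof.
have split_min (u v : I -> nat) :
    (\sum_i u i = \sum_i (u i - v i) + \sum_i minn (u i) (v i))%N.
  by rewrite -big_split; apply: eq_bigr => i _ /=; lia.
have e_min : (\sum_i minn (g i) (b i) = \sum_i minn (b i) (g i))%N.
  by apply: eq_bigr => i _; rewrite minnC.
by move: (split_min b g) (split_min g b); rewrite e_min; lia.
Qed.

Lemma Posz_sum (I : finType) (F : I -> nat) : (\sum_i F i)%N%:Z = \sum_i (F i)%:Z.
Proof. exact: (big_morph Posz PoszD (erefl 0%:Z)). Qed.

Lemma leq_card_in_can (T U : finType) (A : {pred T}) (B : {pred U})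
    (f : T -> U) (g : U -> T) :
  {in A, forall x, f x \in B} -> {in A, cancel f g} -> (#|A| <= #|B|)%N.
Proof.
move=> fAB fK; rewrite -(card_in_image (can_in_inj fK)).
by apply/subset_leq_card/subsetP => _ /imageP[x xA ->]; apply: fAB.
Qed.

Lemma card_in_can2 (T U : finType) (A : {pred T}) (B : {pred U})
    (f : T -> U) (g : U -> T) :
  {in A, forall x, f x \in B} -> {in B, forall y, g y \in A} ->
  {in A, cancel f g} -> {in B, cancel g f} -> #|A| = #|B|.
Proof.
move=> fAB gBA fK gK; apply/eqP.
by rewrite eqn_leq (leq_card_in_can fAB fK) (leq_card_in_can gBA gK).
Qed.

Definition weak_comp (N n : nat) (b : {ffun 'I_N -> 'I_n.+1}) : bool :=
  (\sum_(i < N) b i == n)%N.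

Definition hcomplete (R : pzSemiRingType) (N n : nat) (x : 'I_N -> R) : R :=
  \sum_(b : {ffun 'I_N -> 'I_n.+1} | weak_comp b) \prod_(i < N) x i ^+ b i.

Lemma hcomplete_mul_conj (C : numClosedFieldType) (N n : nat) (x : 'I_N -> C) :
  (forall j, `|x j| = 1) ->
  hcomplete n x * (hcomplete n x)^* =
  \sum_(b : {ffun 'I_N -> 'I_n.+1} | weak_comp b)
    \sum_(g : {ffun 'I_N -> 'I_n.+1} | weak_comp g)
       monoZ x (fun i => (b i : nat)%:Z - (g i : nat)%:Z).
Proof.
move=> x_unit.
have x_neq0 j : x j != 0 by rewrite -normr_eq0 x_unit oner_eq0.
have conj_x j : (x j)^* = (x j)^-1.
  by apply: (mulfI (x_neq0 j)); rewrite -normCK x_unit expr1n mulfV.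
rewrite rmorph_sum mulr_suml; apply: eq_bigr => b _.
rewrite mulr_sumr; apply: eq_bigr => g _.
rewrite rmorph_prod -big_split /monoZ; apply: eq_bigr => i _ /=.
by rewrite (rmorphXn Num.conj_op) /= conj_x !exprnP exprz_inv expfzDr.
Qed.

Lemma inZNk_parts (N k : nat) (a : {ffun 'I_N -> 'I_(4 * k + 1)}) :
  inZNk k (shiftZ a) ->
  (\sum_i (a i - 2 * k) = k)%N /\ (\sum_i (2 * k - a i) = k)%N.
Proof.
rewrite /inZNk /shiftZ => /andP[/eqP sum0 /eqP sum_abs].
have e0 : \sum_i ((a i : nat)%:Z - (2 * k)%N%:Z)
          = (\sum_i (a i - 2 * k))%N%:Z - (\sum_i (2 * k - a i))%N%:Z.
  by rewrite !Posz_sum -sumrB; apply: eq_bigr => i _; lia.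
have e1 : (\sum_i absz ((a i : nat)%:Z - (2 * k)%N%:Z)
          = \sum_i (a i - 2 * k) + \sum_i (2 * k - a i))%N.
  by rewrite -big_split; apply: eq_bigr => i _ /=; lia.
by move: sum0 sum_abs; rewrite e0 e1; lia.
Qed.

Section DifferencePairs.
Variables N n : nat.
Local Notation comp := {ffun 'I_N -> 'I_n.+1}.
Implicit Types (p : comp * comp) (k : nat).

Definition weak_pair p : bool := weak_comp p.1 && weak_comp p.2.

Definition excess p : nat := \sum_i (p.1 i - p.2 i).

(* [p.1 - p.2] in the encoding of [shiftZ]; the default value of [insubd] is
   never used once [excess p = k] (see [diff_codeE]). *)
Definition diff_code k p : {ffun 'I_N -> 'I_(4 * k + 1)} :=
  [ffun i => insubd (Ordinal (ltn_addl (4 * k) (ltnSn 0))) (p.1 i + 2 * k - p.2 i)%N].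

Definition diff_pair k (a : {ffun 'I_N -> 'I_(4 * k + 1)}) p : bool :=
  weak_pair p && [forall i, p.1 i + 2 * k == p.2 i + a i]%N.

Lemma excess_sym p : weak_pair p -> (\sum_i (p.2 i - p.1 i))%N = excess p.
Proof.
by case/andP => /eqP s1 /eqP s2; symmetry; apply: sum_subn_sym; rewrite s1 s2.
Qed.

Lemma excess_le p : weak_pair p -> (excess p <= n)%N.
Proof.
case/andP => /eqP s1 _; rewrite -[X in (_ <= X)%N]s1.
by apply: leq_sum => i _; apply: leq_subr.
Qed.

Lemma diff_codeE k p : weak_pair p -> excess p = k ->
  forall i, (p.1 i + 2 * k = p.2 i + diff_code k p i)%N.
Proof.
move=> wp ek i.
have le1 : (p.1 i - p.2 i <= k)%N by rewrite -ek leq_sum_term.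
have le2 : (p.2 i - p.1 i <= k)%N by rewrite -ek -excess_sym // leq_sum_term.
rewrite ffunE val_insubd ifT; lia.
Qed.

Lemma diff_code_inZNk k p : weak_pair p -> excess p = k ->
  inZNk k (shiftZ (diff_code k p)).
Proof.
move=> wp ek; have /andP[/eqP s1 /eqP s2] := wp.
have shiftE i : shiftZ (diff_code k p) i = (p.1 i : nat)%:Z - (p.2 i : nat)%:Z.
  by rewrite /shiftZ; have := diff_codeE wp ek i; lia.
apply/andP; split; under eq_bigr do rewrite shiftE.
  by rewrite sumrB -!Posz_sum s1 s2 subrr.
have -> : (\sum_i absz ((p.1 i : nat)%:Z - (p.2 i : nat)%:Z)
           = excess p + \sum_i (p.2 i - p.1 i))%N.
  by rewrite -big_split; apply: eq_bigr => i _ /=; lia.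
by rewrite excess_sym // ek addnn -mul2n.
Qed.

Lemma diff_pairE k (a : {ffun 'I_N -> 'I_(4 * k + 1)}) p : inZNk k (shiftZ a) ->
  diff_pair a p = [&& weak_pair p, excess p == k & diff_code k p == a].
Proof.
move=> /inZNk_parts[sum_pos _]; rewrite /diff_pair.
case wp: (weak_pair p) => //=; apply/forallP/andP => [e | [/eqP ek /eqP <-] i].
  have {}e i : (p.1 i + 2 * k = p.2 i + a i)%N by apply/eqP/e.
  have ek : excess p = k.
    by rewrite -[RHS]sum_pos; apply: eq_bigr => i _; have := e i; lia.
  split; first by rewrite ek.
  apply/eqP/ffunP => i; apply/val_inj/eqP.
  by rewrite /= -(eqn_add2l (p.2 i)) -diff_codeE // e.
by rewrite diff_codeE.
Qed.
End DifferencePairs.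

Section DiffPairCount.
Variables (m n k : nat) (a : {ffun 'I_m.+1 -> 'I_(4 * k + 1)}).
Hypotheses (le_kn : (k <= n)%N) (a_in : inZNk k (shiftZ a)).
Local Notation comp := {ffun 'I_m.+1 -> 'I_n.+1}.
Local Notation part := (m.+1.-tuple 'I_(n - k).+1).
Implicit Types (p : comp * comp) (t : part).

Let pos i := (a i - 2 * k)%N.
Let neg i := (2 * k - a i)%N.

Let sum_pos : (\sum_i pos i = k)%N. Proof. exact: (inZNk_parts a_in).1. Qed.
Let sum_neg : (\sum_i neg i = k)%N. Proof. exact: (inZNk_parts a_in).2. Qed.

Let is_part t : bool := (\sum_(i <- t) (i : nat) == n - k)%N.

Let to_part p : part := [tuple inord (minn (p.1 i) (p.2 i)) | i < m.+1].

Let of_part t : comp * comp :=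
  ([ffun i => inord (tnth t i + pos i)], [ffun i => inord (tnth t i + neg i)]).

Let diff_pair_min p : diff_pair a p ->
  (forall i, minn (p.1 i) (p.2 i) + pos i = p.1 i /\
             minn (p.1 i) (p.2 i) + neg i = p.2 i)%N
  /\ (\sum_i minn (p.1 i) (p.2 i) = n - k)%N.
Proof.
case/andP => /andP[/eqP sum1 _] /forallP e.
have decomp i :
    (minn (p.1 i) (p.2 i) + pos i = p.1 i /\ minn (p.1 i) (p.2 i) + neg i = p.2 i)%N.
  by have := eqP (e i); rewrite /pos /neg; lia.
split=> //; apply/eqP; rewrite -(eqn_add2r k) subnK //.
rewrite -[X in _ == X]sum1 -[X in _ + X == _]sum_pos -big_split /=.
by apply/eqP/eq_bigr => i _; apply: (decomp i).1.
Qed.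

Let part_sum t : is_part t -> (\sum_i tnth t i = n - k)%N.
Proof. by rewrite /is_part big_tuple => /eqP. Qed.

Let of_partE t : is_part t -> forall i,
  ((of_part t).1 i = tnth t i + pos i :> nat /\
   (of_part t).2 i = tnth t i + neg i :> nat)%N.
Proof.
move=> /part_sum sum_t i; have := leq_sum_term (fun i => tnth t i : nat) i.
have := leq_sum_term pos i; have := leq_sum_term neg i.
rewrite sum_t sum_pos sum_neg /= !ffunE => ? ? ?.
by rewrite !inordK //; lia.
Qed.

Let to_part_is_part p : diff_pair a p -> is_part (to_part p).
Proof.
case/diff_pair_min => _ sum_min; rewrite /is_part big_tuple -[X in _ == X]sum_min.
apply/eqP/eq_bigr => i _; rewrite tnth_mktuple inordK // ltnS -sum_min.
exact: (leq_sum_term (fun i => minn (p.1 i) (p.2 i))).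
Qed.

Let of_part_diff_pair t : is_part t -> diff_pair a (of_part t).
Proof.
move=> t_part; have vals := of_partE t_part; have sum_t := part_sum t_part.
apply/andP; split; [apply/andP; split|].
- apply/eqP; under eq_bigr do rewrite (vals _).1.
  by rewrite big_split /= sum_t sum_pos subnK.
- apply/eqP; under eq_bigr do rewrite (vals _).2.
  by rewrite big_split /= sum_t sum_neg subnK.
- apply/forallP => i; rewrite (vals i).1 (vals i).2 /pos /neg; apply/eqP; lia.
Qed.

Let to_partK : {in diff_pair a, cancel to_part of_part}.
Proof.
move=> p pab; have [decomp sum_min] := diff_pair_min pab.
have le_min i : (minn (p.1 i) (p.2 i) < (n - k).+1)%N.
  by rewrite ltnS -sum_min (leq_sum_term (fun i => minn (p.1 i) (p.2 i))).
rewrite [RHS]surjective_pairing; congr pair; apply/ffunP => i; apply: val_inj.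
  by rewrite ffunE tnth_mktuple /= (inordK (le_min i)) (decomp i).1 inordK.
by rewrite ffunE tnth_mktuple /= (inordK (le_min i)) (decomp i).2 inordK.
Qed.

Let of_partK : {in is_part, cancel of_part to_part}.
Proof.
move=> t t_part; have vals := of_partE t_part.
apply: eq_from_tnth => i; rewrite tnth_mktuple; apply: val_inj.
have min_eq : minn ((of_part t).1 i) ((of_part t).2 i) = tnth t i.
  by rewrite (vals i).1 (vals i).2 /pos /neg; lia.
by rewrite /= min_eq inordK.
Qed.

Lemma card_diff_pair :
  #|[pred p : comp * comp | diff_pair a p]| = 'C(m + (n - k), m).
Proof.
rewrite -card_ord_partitions; apply: (card_in_can2 (f := to_part) (g := of_part)).
- by move=> p; rewrite inE; apply: to_part_is_part.
- by move=> t; rewrite inE; apply: of_part_diff_pair.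
- exact: to_partK.
- by move=> t; rewrite inE; apply: of_partK.
Qed.
End DiffPairCount.

Lemma sum_weak_pairs_monoZ (C : unitRingType) (m n : nat) (x : 'I_m.+1 -> C) :
  \sum_(b : {ffun 'I_m.+1 -> 'I_n.+1} | weak_comp b)
    \sum_(g : {ffun 'I_m.+1 -> 'I_n.+1} | weak_comp g)
       monoZ x (fun i => (b i : nat)%:Z - (g i : nat)%:Z)
  = \sum_(k < n.+1) 'C(m + (n - k), m)%:R * Sk k x.
Proof.
rewrite pair_big_dep /= (partition_big (fun p => inord (excess p) : 'I_n.+1) xpredT) //=.
apply: eq_bigr => k _.
have excess_eq (p : {ffun 'I_m.+1 -> 'I_n.+1} * {ffun 'I_m.+1 -> 'I_n.+1}) :
    weak_pair p -> (inord (excess p) == k) = (excess p == k).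
  by move=> wp; rewrite -(inj_eq val_inj) /= inordK // ltnS excess_le.
rewrite (partition_big (diff_code k) (fun a => inZNk k (shiftZ a))) /=; last first.
  by move=> p /andP[wp]; rewrite excess_eq // => /eqP; apply: diff_code_inZNk.
rewrite /Sk mulr_sumr; apply: eq_bigr => a a_in.
rewrite (eq_bigl (diff_pair a)); last first.
  move=> p; rewrite diff_pairE // -/(weak_pair p).
  by case wp: (weak_pair p); rewrite //= excess_eq.
rewrite (eq_bigr (fun _ => monoZ x (shiftZ a))); last first.
  move=> p /andP[_ /forallP e]; apply: eq_bigr => i _.
  by rewrite /shiftZ; congr (_ ^ _); have := eqP (e i); lia.
by rewrite sumr_const card_diff_pair ?mulr_natl // -ltnS.
Qed.

Lemma sigma_torusE (C : numClosedFieldType) (m n : nat) (x : 'I_m.+1 -> C) :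
  (forall j, `|x j| = 1) ->
  sigma m%:R n x = 'C(m + n, m)%:R^-1 * (hcomplete n x * (hcomplete n x)^*).
Proof.
move=> x_unit; have bin_neq0 : 'C(m + n, m)%:R != 0 :> C.
  by rewrite pnatr_eq0 -lt0n bin_gt0 leq_addr.
apply: (canRL (mulKf bin_neq0)).
rewrite hcomplete_mul_conj // sum_weak_pairs_monoZ /sigma mulr_sumr.
by apply: eq_bigr => k _; rewrite mulrA bin_mul_poch_ratio // -ltnS.
Qed.

Theorem corollary4p6 (C : numClosedFieldType) (N n : nat) (x : 'I_N -> C) :
  (2 <= N)%N ->
  (forall j : 'I_N, `|x j| = 1) ->
  sigma (N.-1)%:R n x \is Num.real /\ 0 <= sigma (N.-1)%:R n x.
Proof.
case: N x => [|m] x // _ x_unit /=.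
have sigma_ge0 : 0 <= sigma m%:R n x.
  by rewrite sigma_torusE // mulr_ge0 ?mul_conjC_ge0 // invr_ge0 ler0n.
by split=> //; apply: ger0_real.
Qed.
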